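(* Let $Z\subseteq\Sigma^{\mathbb Z}$ be a sofic shift, $\tilde f:\mathbb R^n\times\Sigma\to\mathbb R^n$, and consider the switched system $x(k+1)=\tilde f(x(k),z_k)$ driven by $\bar z\in Z$ (i.e. $f(x,\bar z)=\tilde f(x,z_0)$). Let $(C_1,\dots,C_K)$ be any graph-induced covering of $Z$ and $\mathcal G$ any presentation of it. The system is globally uniformly asymptotically stable if and only if there exists a $\mathcal G$-based Lyapunov function for it.
   Context: $\Sigma$ nonempty countable alphabet; $\Sigma^{\mathbb Z}$ bi-infinite sequences $\bar z=(z_k)_{k\in\mathbb Z}$; $\sigma(\bar z)_k=z_{k+1}$. A labeled graph is $\mathcal G=(S,E)$, $S$ finite, $E\subseteq S\times S\times\Sigma$; standing assumption: every node has at least one incoming and one outgoing edge. A bi-infinite walk labeled by $\bar z$ is $(e_k)_{k\in\mathbb Z}$ with $e_k=(s_k,s_{k+1},z_k)\in E$, starting at $s_0$. $\mathcal Z(\mathcal G)$ / $\mathcal Z(\mathcal G,s)$: labels of all bi-infinite walks / those starting at $s$. Sofic shift: a set $\mathcal Z(\mathcal G)$. Graph-induced covering of $Z$ with presentation $\mathcal G$: a family $(C_1,\dots,C_K)$ with $\mathcal G$ having nodes $s_1,\dots,s_K$, $\mathcal Z(\mathcal G)=Z$ and $C_j=\mathcal Z(\mathcal G,s_j)$. $\Phi(k,x_0,\bar z)$ is the solution at time $k$ with $x(0)=x_0$. Class $\mathcal K_\infty$ and $\mathcal{KL}$ as usual. GUAS: there is $\beta\in\mathcal{KL}$ with $|\Phi(k,x_0,\bar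 z)|\le\beta(|x_0|,k)$ for all $k\in\mathbb N,x_0\in\mathbb R^n,\bar z\in Z$. A $\mathcal G$-based Lyapunov function is $W:\mathbb R^n\times\{1,\dots,K\}\to\mathbb R$ such that there are $\alpha_1,\alpha_2\in\mathcal K_\infty$, $\gamma\in[0,1)$ with $\alpha_1(|x|)\le W(x,j)\le\alpha_2(|x|)$ for all $x,j$ and $W(f(x,\bar z),l)\le\gamma W(x,j)$ for all $x$, all edges $(s_j,s_l,i)\in E$ and all $\bar z\in C_j$ with $z_0=i$, $\sigma(\bar z)\in C_l$ (for switched systems: $W(\tilde f(x,i),l)\le\gamma W(x,j)$ for every edge $(s_j,s_l,i)\in E$). *)

From HB Require Import structures.
From mathcomp Require Import all_boot all_order all_algebra.
From mathcomp Require Import all_classical all_reals all_analysis.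
Set Implicit Arguments. Unset Strict Implicit. Unset Printing Implicit Defensive.
Import Order.TTheory GRing.Theory Num.Theory.
Local Open Scope ring_scope.
Local Open Scope classical_set_scope.

Definition vnorm (R : realType) (n : nat) (x : 'rV[R]_n) : R :=
  Num.sqrt (\sum_(i < n) x ord0 i ^+ 2).

Definition classK (R : realType) (a : R -> R) : Prop :=
  {within [set x : R^o | 0 <= x], continuous (a : R^o -> R^o)} /\ a 0 = 0 /\
  (forall x y : R, 0 <= x -> x < y -> a x < a y).

Definition classKinf (R : realType) (a : R -> R) : Prop :=
  classK a /\ (forall M : R, exists r : R, 0 <= r /\ M <= a r).

Definition classKL (R : realType) (b : R -> nat -> R) : Prop :=
  (forall k : nat, classK (fun r => b r k)) /\
  (forall r : R, 0 <= r ->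
     (forall k : nat, b r k.+1 <= b r k) /\ ((fun k => b r k : R^o) @ \oo --> (0 : R^o))).

(* Labeled graphs: nodes S (finite), edges E : S -> S -> Sigma -> Prop,
   E s s' i  means  (s, s', i) is an edge. *)
Definition standing (S : finType) (Sig : Type) (E : S -> S -> Sig -> Prop) : Prop :=
  forall s : S, (exists s' i, E s' s i) /\ (exists s' i, E s s' i).

Definition is_walk (S : finType) (Sig : Type) (E : S -> S -> Sig -> Prop)
  (z : int -> Sig) (w : int -> S) : Prop :=
  forall k : int, E (w k) (w (k + 1)) (z k).

Definition ZG (S : finType) (Sig : Type) (E : S -> S -> Sig -> Prop) : set (int -> Sig) :=
  [set z | exists w, is_walk E z w].
Definition ZGs (S : finType) (Sig : Type) (E : S -> S -> Sig -> Prop) (s : S)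
  : set (int -> Sig) :=
  [set z | exists w, is_walk E z w /\ w 0 = s].

Definition shift (Sig : Type) (z : int -> Sig) : int -> Sig := fun k => z (k + 1).

Fixpoint Phi (X Sig : Type) (ft : X -> Sig -> X) (k : nat) (x0 : X) (z : int -> Sig) : X :=
  match k with
  | 0 => x0
  | k'.+1 => ft (Phi ft k' x0 z) (z (Posz k'))
  end.

Definition GUAS (R : realType) (n : nat) (Sig : Type)
  (ft : 'rV[R]_n -> Sig -> 'rV[R]_n) (Z : set (int -> Sig)) : Prop :=
  exists b : R -> nat -> R, classKL b /\
    forall (k : nat) (x0 : 'rV[R]_n) (z : int -> Sig), Z z ->
      vnorm (Phi ft k x0 z) <= b (vnorm x0) k.

(* G-based Lyapunov function for the switched system (the covering sets C_j
   are indexed by the nodes of G) *)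
Definition GLyapunov (R : realType) (n : nat) (Sig : Type) (S : finType)
  (ft : 'rV[R]_n -> Sig -> 'rV[R]_n) (E : S -> S -> Sig -> Prop)
  (W : 'rV[R]_n -> S -> R) : Prop :=
  exists (a1 a2 : R -> R) (gamma : R),
    classKinf a1 /\ classKinf a2 /\ 0 <= gamma /\ gamma < 1 /\
    (forall x j, a1 (vnorm x) <= W x j /\ W x j <= a2 (vnorm x)) /\
    (forall x j l i, E j l i -> W (ft x i) l <= gamma * W x j).

(* Sufficiency: along a walk labeled by z the Lyapunov function contracts by
   gamma at every step, so a1 |x(k)| <= gamma^k a2 |x(0)| and inverting a1
   gives a KL bound.  Necessity: from a KL bound b, a discrete version of
   Sontag's lemma yields K_inf functions a1, a2 with
   a1 (b r k) <= 2^-k a2 r; then W(x, j), the supremum of 2^k a1 |x(k)| over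
   all solutions from x driven by labels of walks starting at node j, lies
   between a1 |x| (take k = 0) and a2 |x|, and prefixing an edge (j, l, i) to
   walks from l shows W(f(x, i), l) <= W(x, j) / 2. *)

From mathcomp Require Import all_boot all_order all_algebra.
From mathcomp Require Import all_classical all_reals all_analysis.
From mathcomp Require Import ring lra zify.
Set Implicit Arguments. Unset Strict Implicit. Unset Printing Implicit Defensive.
Import Order.TTheory GRing.Theory Num.Theory.
Import numFieldNormedType.Exports.
Local Open Scope ring_scope.
Local Open Scope classical_set_scope.

Section ClassKFunctions.
Variable R : realType.
Implicit Types (f g : R -> R) (x y : R).

Definition nonneg_continuous f := forall x, 0 <= x -> forall e, 0 < e ->
  exists2 d, 0 < d & forall y, 0 <= y -> `|y - x| < d -> `|f y - f x| < e.

Definition nonneg_increasing f := forall x y, 0 <= x -> x < y -> f x < f y.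

Definition unbounded_above f := forall M, exists r, 0 <= r /\ M <= f r.

Lemma nonneg_continuousP f : nonneg_continuous f <->
  {within [set x : R^o | 0 <= x], continuous (f : R^o -> R^o)}.
Proof.
split=> [cf|/subspace_continuousP cf x x0 e e0].
  apply/subspace_continuousP => x /= x0; apply/cvgrPdist_lt => e e0.
  have [d d0 H] := cf x x0 e e0.
  apply/nbhs_ballP; exists d => //= y; rewrite /ball /= => xy y0.
  by rewrite distrC; apply: H => //; rewrite distrC.
have /cvgrPdist_lt/(_ e e0)/nbhs_ballP[d /= d0 H] := cf x x0.
exists d => // y y0 yx.
by rewrite distrC; apply: H => //; rewrite /ball /= distrC.
Qed.

Lemma classKP f : classK f <-> [/\ nonneg_continuous f, f 0 = 0 & nonneg_increasing f].
Proof. by split=> [[/nonneg_continuousP c [f0 s]]|[/nonneg_continuousP c f0 s]]. Qed.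

Lemma classKinfP f : classKinf f <->
  [/\ nonneg_continuous f, f 0 = 0, nonneg_increasing f & unbounded_above f].
Proof.
split=> [[/classKP[c f0 s] u]|[c f0 s u]] //.
by split=> //; apply/classKP.
Qed.

Section Increasing.
Variable f : R -> R.
Hypothesis f_incr : nonneg_increasing f.

Lemma nonneg_incr_le x y : 0 <= x -> x <= y -> f x <= f y.
Proof. by move=> x0; rewrite le_eqVlt => /orP[/eqP->//|/(f_incr x0)/ltW]. Qed.

Lemma nonneg_incr_ge0 x : f 0 = 0 -> 0 <= x -> 0 <= f x.
Proof. by move=> f0 x0; rewrite -f0; apply: nonneg_incr_le. Qed.

Lemma nonneg_incr_ltW x y : 0 <= y -> f x < f y -> x < y.
Proof.
move=> y0 fxy; rewrite ltNge; apply/negP => yx.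
by move: (nonneg_incr_le y0 yx); rewrite leNgt fxy.
Qed.

Lemma nonneg_incr_leW x y : 0 <= y -> f x <= f y -> x <= y.
Proof.
move=> y0 fxy; rewrite leNgt; apply/negP => yx.
by move: (f_incr y0 yx); rewrite ltNge fxy.
Qed.

End Increasing.

Lemma nonneg_continuous_comp f g : nonneg_continuous f -> nonneg_continuous g ->
  (forall x, 0 <= x -> 0 <= g x) -> nonneg_continuous (f \o g).
Proof.
move=> cf cg gp x x0 e e0.
have [d1 d10 H1] := cf (g x) (gp x x0) e e0.
have [d2 d20 H2] := cg x x0 d1 d10.
by exists d2 => // y y0 yx; apply: H1; [exact: gp|exact: H2].
Qed.

Lemma nonneg_continuousZ f c : 0 <= c -> nonneg_continuous f ->
  nonneg_continuous (fun x => c * f x).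
Proof.
move=> c0 cf x x0 e e0.
have e1 : 0 < e / (c + 1) by rewrite divr_gt0 // ltr_pwDr.
have [d d0 H] := cf x x0 _ e1.
exists d => // y y0 yx; rewrite -mulrBr normrM ger0_norm //.
have := H y y0 yx; rewrite ltr_pdivlMr ?ltr_pwDr // => h.
have := normr_ge0 (f y - f x); nra.
Qed.

Lemma nonneg_continuous_inverse f g : nonneg_increasing f ->
  (forall y, 0 <= y -> 0 <= g y /\ f (g y) = y) -> nonneg_continuous g.
Proof.
move=> s fK y0 y00 e e0; have [s00 fs0] := fK y0 y00; set s0 := g y0 in s00 fs0 *.
have d1P : 0 < f (s0 + e) - y0 by rewrite subr_gt0 -{1}fs0 s // ltrDl.
pose d2 := if 0 <= s0 - e then y0 - f (s0 - e) else 1.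
have d2P : 0 < d2 by rewrite /d2; case: ifP => // h; rewrite subr_gt0 -{1}fs0 s // gtrBl.
exists (Num.min (f (s0 + e) - y0) d2); first by rewrite lt_min d1P.
move=> y y0'; rewrite lt_min => /andP[h1 h2]; have [gy0 fgy] := fK y y0'.
have up : g y < s0 + e.
  apply: (nonneg_incr_ltW s); first by rewrite addr_ge0 // ltW.
  rewrite fgy; move: h1; rewrite ltr_norml => /andP[_ h1]; lra.
have lo : s0 - e < g y.
  move: h2; rewrite /d2; case: ifP => [h|h _]; last by apply: lt_le_trans gy0; rewrite ltNge h.
  move=> h2; apply: (nonneg_incr_ltW s) => //; rewrite fgy.
  move: h2; rewrite ltr_norml => /andP[h2 _]; lra.
rewrite ltr_norml; apply/andP; split; lra.
Qed.

Lemma classKinf_inverse f : classKinf f ->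
  exists g, [/\ classKinf g, forall y, 0 <= y -> 0 <= g y /\ f (g y) = y
              & forall x, 0 <= x -> g (f x) = x].
Proof.
move=> /classKinfP[c f0 s ub].
have ex y : exists t, 0 <= t /\ f t = Num.max y 0.
  have [r [r0 yr]] := ub (Num.max y 0).
  have cw : {within `[0, r], continuous f}.
    apply: (@continuous_subspaceW _ _ _ [set x : R^o | 0 <= x]).
      by move=> t; rewrite /= in_itv /= => /andP[].
    exact/nonneg_continuousP.
  have hv : Num.min (f 0) (f r) <= Num.max y 0 <= Num.max (f 0) (f r).
    rewrite f0; apply/andP; split; first by rewrite ge_min le_max lexx orbT.
    by rewrite le_max yr orbT.
  have [t] := @IVT _ f 0 r (Num.max y 0) r0 cw hv.
  by rewrite in_itv /= => /andP[t0 _] ft; exists t.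
have [g gP] := choice ex.
have fK y : 0 <= y -> 0 <= g y /\ f (g y) = y.
  by move=> y0; have [g0 fg] := gP y; rewrite fg (max_idPl y0).
have gK x : 0 <= x -> g (f x) = x.
  move=> x0; have [g0 fg] := fK _ (nonneg_incr_ge0 s f0 x0).
  by apply/le_anti/andP; split; apply: (nonneg_incr_leW s) => //; rewrite fg.
exists g; split => //; apply/classKinfP; split.
- exact: nonneg_continuous_inverse fK.
- by rewrite -f0 gK.
- move=> x y x0 xy; have y0 : 0 <= y by apply: le_trans (ltW xy).
  have [gx0 fgx] := fK x x0; have [gy0 fgy] := fK y y0.
  by apply: (nonneg_incr_ltW s) => //; rewrite fgx fgy.
- move=> M; have [M0|M0] := leP 0 M.
    by exists (f M); split; [exact: nonneg_incr_ge0|rewrite gK].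
  by exists 0; split => //; rewrite -f0 gK // ltW.
Qed.

Section Minorant.
Variable h : R -> R.
Hypothesis h_mono : forall s t : R, 0 <= s -> s <= t -> h s <= h t.
Hypothesis h_ge0 : forall s : R, 0 <= s -> 0 <= h s.
Hypothesis h_gt0 : forall s : R, 0 < s -> 0 < h s.
Hypothesis h_unbounded : unbounded_above h.

(* The inf-convolution of h with |.| is a 1-Lipschitz, nondecreasing minorant
   of h; multiplying it by s / (1 + s) makes it vanish at 0 and increase strictly. *)
Let env s := inf [set h t + `|s - t| | t in [set t : R | 0 <= t]].

Let env_le s t : 0 <= t -> env s <= h t + `|s - t|.
Proof.
move=> t0; apply: ge_inf; last by exists t.
by exists 0 => y [u /= u0 <-]; rewrite addr_ge0 ?h_ge0.
Qed.

Let env_ge s c : (forall t, 0 <= t -> c <= h t + `|s - t|) -> c <= env s.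
Proof.
move=> H; apply: lb_le_inf; first by exists (h 0 + `|s - 0|); exists 0 => /=.
by move=> y [u /= u0 <-]; apply: H.
Qed.

Let env_ge0 s : 0 <= env s.
Proof. by apply: env_ge => t t0; rewrite addr_ge0 ?h_ge0. Qed.

Let env_leh s : 0 <= s -> env s <= h s.
Proof. by move=> s0; apply: le_trans (env_le s s0) _; rewrite subrr normr0 addr0. Qed.

Let env_lipschitz s s' : `|env s' - env s| <= `|s' - s|.
Proof.
have half u v : env u - `|u - v| <= env v.
  apply: env_ge => t t0; rewrite lerBlDr; apply: le_trans (env_le u t0) _.
  rewrite -addrA lerD2l; have -> : u - t = (v - t) + (u - v) by ring.
  exact: ler_normD.
have := half s s'; have := half s' s; rewrite distrC ler_norml; lra.
Qed.

Let env_mono s s' : 0 <= s -> s <= s' -> env s <= env s'.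
Proof.
move=> s0 ss'; apply: env_ge => t t0.
have [ts|st] := leP t s.
  apply: le_trans (env_le s t0) _; rewrite lerD2l !ger0_norm ?subr_ge0 ?lerD2r //.
  exact: le_trans ss'.
apply: le_trans (env_leh s0) _; apply: le_trans (h_mono s0 (ltW st)) _.
by rewrite lerDl.
Qed.

Let env_lower s : 0 <= s -> Num.min (h (s / 2)) (s / 2) <= env s.
Proof.
move=> s0; apply: env_ge => t t0; rewrite ge_min.
have [ts|st] := leP (s / 2) t.
  by rewrite (le_trans (h_mono _ ts)) ?divr_ge0 ?lerDl.
apply/orP; right; apply: le_trans (_ : `|s - t| <= _); last by rewrite lerDr h_ge0.
by rewrite ger0_norm; lra.
Qed.

Let q (s : R) := s / (1 + s).

Let qE s t : 0 <= s -> 0 <= t -> q t - q s = (t - s) / ((1 + t) * (1 + s)).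
Proof. by move=> s0 t0; rewrite /q; field; rewrite !gt_eqF ?ltr_pwDl. Qed.

Let q_ge0 s : 0 <= s -> 0 <= q s.
Proof. by move=> s0; rewrite divr_ge0 // addr_ge0. Qed.

Let q_le1 s : 0 <= s -> q s <= 1.
Proof. by move=> s0; rewrite ler_pdivrMr ?ltr_pwDl // mul1r lerDr. Qed.

Let q_lipschitz s t : 0 <= s -> 0 <= t -> `|q t - q s| <= `|t - s|.
Proof.
move=> s0 t0; have p1 : 1 <= (1 + t) * (1 + s) by nra.
have p0 : 0 < (1 + t) * (1 + s) by apply: lt_le_trans p1.
by rewrite qE // normrM ler_piMr ?normr_ge0 // normfV gtr0_norm ?invf_le1.
Qed.

Let q_incr : nonneg_increasing q.
Proof.
move=> s t s0 st; rewrite -subr_gt0 qE ?(le_trans s0 (ltW st)) //.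
by rewrite divr_gt0 ?subr_gt0 // mulr_gt0 // ltr_pwDl // (le_trans s0 (ltW st)).
Qed.

Let envq_continuous : nonneg_continuous (fun s => env s * q s).
Proof.
move=> x x0 e e0; exists (e / (1 + env x)); first by rewrite divr_gt0 // ltr_pwDl.
move=> y y0; rewrite ltr_pdivlMr ?ltr_pwDl // => yx.
have -> : env y * q y - env x * q x = (env y - env x) * q y + env x * (q y - q x) by ring.
apply: le_lt_trans (ler_normD _ _) _.
rewrite (normrM (env y - env x)) (normrM (env x)) (ger0_norm (env_ge0 x)).
have h1 := env_lipschitz x y; have h2 := q_lipschitz x0 y0.
have h3 : `|env y - env x| * `|q y| <= `|y - x|.
  by rewrite (le_trans _ h1) // ler_piMr ?normr_ge0 // ger0_norm ?q_le1 ?q_ge0.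
have h4 : env x * `|q y - q x| <= env x * `|y - x| by rewrite ler_wpM2l ?env_ge0.
have : `|y - x| * (1 + env x) = `|y - x| + env x * `|y - x| by ring.
lra.
Qed.

Lemma classKinf_minorant : exists a, classKinf a /\ forall s, 0 <= s -> a s <= h s.
Proof.
exists (fun s => env s * q s); split; last first.
  by move=> s s0; rewrite (le_trans _ (env_leh s0)) // ler_piMr ?q_le1.
apply/classKinfP; split => //.
- by rewrite /q mul0r mulr0.
- move=> x y x0 xy; have y0 : 0 < y by apply: le_lt_trans xy.
  have env_y : 0 < env y.
    by apply: lt_le_trans (env_lower (ltW y0)); rewrite lt_min h_gt0 ?divr_gt0.
  apply: (@le_lt_trans _ _ (env y * q x)); last by rewrite ltr_pM2l // q_incr.
  by rewrite ler_wpM2r ?q_ge0 ?env_mono // ltW.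
move=> M; set m := Num.max M 0.
have [s [s0 hs]] := h_unbounded (2 * m).
exists (Num.max (2 * s) (Num.max (4 * M) 1)); set t := Num.max _ _.
have t1 : 1 <= t by rewrite !le_max lexx !orbT.
have t2s : 2 * s <= t by rewrite le_max lexx.
have t4M : 4 * M <= t by rewrite !le_max lexx !orbT.
split; first exact: le_trans t1.
have qt : 1 / 2 <= q t by rewrite /q ler_pdivlMr ?ltr_pwDl ?(le_trans ler01) //; lra.
have hts : h s <= h (t / 2) by apply: h_mono => //; rewrite ler_pdivlMr //; lra.
have Mm : M <= m by rewrite le_max lexx.
have m0 : 0 <= m by rewrite le_max lexx orbT.
have env_t : 2 * m <= env t.
  apply: le_trans (env_lower (le_trans ler01 t1)); rewrite le_min (le_trans hs hts) /=.
  by rewrite /m; case: (leP 0 M) => M0 /=; lra.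
have := env_ge0 t; nra.
Qed.

End Minorant.

Section Majorant.
Variable g : R -> R.
Hypothesis g_mono : forall s t : R, 0 <= s -> s <= t -> g s <= g t.
Hypothesis g_ge0 : forall s : R, 0 <= s -> 0 <= g s.
Hypothesis g_small : forall e : R, 0 < e ->
  exists2 d, 0 < d & forall r, 0 <= r -> r < d -> g r < e.
Hypothesis g_unbounded : unbounded_above g.

(* The generalized inverse of g has a class-K_inf minorant, whose inverse
   dominates g. *)
Let ginv y := inf [set r | 0 <= r /\ y <= g r].

Let ginv_le y r : 0 <= r -> y <= g r -> ginv y <= r.
Proof. by move=> r0 yr; apply: ge_inf => //; exists 0 => u []. Qed.

Let ginv_ge y c : (forall r, 0 <= r -> y <= g r -> c <= r) -> c <= ginv y.
Proof.
move=> H; apply: lb_le_inf; last by move=> u [] /H; apply.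
by have [r [r0 yr]] := g_unbounded y; exists r.
Qed.

Lemma classKinf_majorant : exists a, classKinf a /\ forall r, 0 <= r -> g r <= a r.
Proof.
have ginv_mono s t : 0 <= s -> s <= t -> ginv s <= ginv t.
  by move=> s0 st; apply: ginv_ge => r r0 tr; apply: ginv_le => //; exact: le_trans tr.
have ginv_ge0 s : 0 <= s -> 0 <= ginv s by move=> _; apply: ginv_ge.
have ginv_gt0 s : 0 < s -> 0 < ginv s.
  move=> s0; have [d d0 Hd] := g_small s0; apply: lt_le_trans d0 _.
  apply: ginv_ge => r r0 sr; rewrite leNgt; apply/negP => rd.
  by move: (Hd r r0 rd); rewrite ltNge sr.
have ginv_unbounded : unbounded_above ginv.
  move=> M; set m := Num.max M 0.
  have m0 : 0 <= m by rewrite le_max lexx orbT.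
  exists (g m + 1); split; first by rewrite addr_ge0 ?g_ge0.
  apply: (le_trans (_ : M <= m)); first by rewrite le_max lexx.
  apply: ginv_ge => r r0 gr; rewrite leNgt; apply/negP => rm.
  by have := g_mono r0 (ltW rm); lra.
have [b [bK b_le]] := classKinf_minorant ginv_mono ginv_ge0 ginv_gt0 ginv_unbounded.
have [a [aK _ ba]] := classKinf_inverse bK.
exists a; split => // r r0; have gr0 := g_ge0 r0.
have /classKinfP[_ _ a_incr _] := aK; have /classKinfP[_ b0 b_incr _] := bK.
rewrite -(ba _ gr0); apply: nonneg_incr_le => //; first exact: nonneg_incr_ge0.
by apply: le_trans (b_le _ gr0) _; apply: ginv_le.
Qed.

End Majorant.
End ClassKFunctions.

Section KLDecay.
Variable R : realType.
Variable b : R -> nat -> R.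
Hypothesis bKL : classKL b.

Let b_classK k : [/\ nonneg_continuous (b^~ k), b 0 k = 0 & nonneg_increasing (b^~ k)].
Proof. by have [/(_ k)/classKP] := bKL. Qed.

Let b_ge0 r k : 0 <= r -> 0 <= b r k.
Proof. by move=> r0; have [_ b0 incr] := b_classK k; exact: (nonneg_incr_ge0 incr b0 r0). Qed.

Let b_mono r r' k : 0 <= r -> r <= r' -> b r k <= b r' k.
Proof. by move=> r0 rr'; have [_ _ incr] := b_classK k; exact: (nonneg_incr_le incr r0 rr'). Qed.

Let b_le_b0 r k : 0 <= r -> b r k <= b r 0.
Proof.
move=> r0; have [_ /(_ r r0)[b_decr _]] := bKL.
by elim: k => [//|k IH]; exact: le_trans (b_decr k) IH.
Qed.

Let b_eventually_lt r e : 0 <= r -> 0 < e -> exists N, forall k, (N <= k)%N -> b r k < e.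
Proof.
move=> r0 e0; have [_ /(_ r r0)[_ /cvgrPdist_lt/(_ e e0)[N _ HN]]] := bKL.
by exists N => k /HN; rewrite sub0r normrN ger0_norm ?b_ge0.
Qed.

(* budget r is the largest 2 ^+ k at which b r k has not yet decayed below
   (1 + r)^-1.  As this threshold tends to 0 when r grows, budget bounds 2 ^+ k
   whenever b r k stays above a fixed positive level (budget_bound). *)
Let budget_set r := [set (2 : R) ^+ k | k in [set k | k = 0%N \/ (1 + r)^-1 <= b r k]].
Let budget r := sup (budget_set r).

Let budget_set_ub r : 0 <= r -> has_ubound (budget_set r).
Proof.
move=> r0; have thr0 : 0 < (1 + r)^-1 by rewrite invr_gt0 ltr_pwDl.
have [N HN] := b_eventually_lt r0 thr0.
exists (2 ^+ N) => _ [k /= hk <-]; rewrite ler_eXn2l ?ltr1n //.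
case: hk => [->//|hk]; rewrite leqNgt; apply/negP => /ltnW /HN.
by rewrite ltNge hk.
Qed.

Let budget_ge r k : 0 <= r -> (1 + r)^-1 <= b r k -> 2 ^+ k <= budget r.
Proof. by move=> r0 h; apply: (ub_le_sup (budget_set_ub r0)); exists k => //; right. Qed.

Let budget_ge1 r : 0 <= r -> 1 <= budget r.
Proof. by move=> r0; apply: (ub_le_sup (budget_set_ub r0)); exists 0%N => //; left. Qed.

Let budget_mono r r' : 0 <= r -> r <= r' -> budget r <= budget r'.
Proof.
move=> r0 rr'; have r'0 : 0 <= r' by apply: le_trans rr'.
apply: ge_sup; first by exists 1, 0%N => //; left.
move=> _ [k /= [->|hk] <-]; first exact: budget_ge1.
apply: budget_ge => //; apply: le_trans (b_mono k r0 rr'); apply: le_trans hk.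
by rewrite lef_pV2 ?posrE ?ltr_pwDl // lerD2l.
Qed.

Let budget_bound s r k : 0 < s -> 0 <= r -> s <= b r k -> 2 ^+ k <= budget r + budget s^-1.
Proof.
move=> s0 r0 sb; have s'0 : 0 <= s^-1 by rewrite invr_ge0 ltW.
have ge0 := le_trans ler01 (budget_ge1 _).
have [rs|sr] := leP r s^-1.
  have thr : (1 + s^-1)^-1 <= b s^-1 k.
    apply: le_trans (b_mono k r0 rs); apply: le_trans sb.
    rewrite -[s in _ <= s]invrK lef_pV2 ?posrE ?ltr_pwDl ?invr_gt0 //; lra.
  by apply: le_trans (budget_ge s'0 thr) _; rewrite lerDr ge0.
have thr : (1 + r)^-1 <= b r k.
  apply: le_trans sb; rewrite -[s in _ <= s]invrK lef_pV2 ?posrE ?ltr_pwDl ?invr_gt0 //; lra.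
by apply: le_trans (budget_ge r0 thr) _; rewrite lerDl ge0.
Qed.

Let upper_majorant : exists a2, classKinf a2 /\
  forall r, 0 <= r -> r * (1 + budget r) <= a2 r.
Proof.
have ge1 := budget_ge1; have mono := budget_mono.
apply: classKinf_majorant.
- move=> s t s0 st; apply: ler_pM => //; last by rewrite lerD2l mono.
  by rewrite addr_ge0 // (le_trans ler01) ?ge1.
- by move=> s s0; rewrite mulr_ge0 // addr_ge0 // (le_trans ler01) ?ge1.
- move=> e e0; have G1 := ge1 1 ler01.
  exists (Num.min 1 (e / (1 + budget 1))); first by rewrite lt_min ltr01 divr_gt0 //; lra.
  move=> r r0; rewrite lt_min => /andP[r1]; rewrite ltr_pdivlMr; last lra.
  by have := mono _ _ r0 (ltW r1); have := ge1 r r0; nra.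
- move=> M; set m := Num.max M 0; have m0 : 0 <= m by rewrite le_max lexx orbT.
  exists m; split => //; have Mm : M <= m by rewrite le_max lexx.
  by have := ge1 m m0; nra.
Qed.

Let a2 := projT1 (cid upper_majorant).
Let a2K : classKinf a2. Proof. by case: (projT2 (cid upper_majorant)). Qed.
Let a2_ge r : 0 <= r -> r * (1 + budget r) <= a2 r.
Proof. by case: (projT2 (cid upper_majorant)) => _; apply. Qed.

(* The largest candidate compatible with a1 (b r k) <= a2 r / 2 ^+ k; the
   extra point s only ensures that the infimum is taken over a nonempty set. *)
Let lower_set s := [set y : R | y = s \/
  exists r k, [/\ 0 <= r, s <= b r k & y = (2 ^+ k)^-1 * a2 r]].
Let lower s := inf (lower_set s).

Let a2_ge0 r : 0 <= r -> 0 <= a2 r.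
Proof. by move=> r0; have /classKinfP[_ a20 incr _] := a2K; exact: (nonneg_incr_ge0 incr a20 r0). Qed.

Let lower_set_lb s : has_lbound (lower_set s).
Proof.
exists (Num.min s 0) => _ [->|[r [k [r0 _ ->]]]]; first by rewrite ge_min lexx.
by rewrite ge_min mulr_ge0 ?a2_ge0 ?orbT // invr_ge0 exprn_ge0.
Qed.

Let lower_le s y : lower_set s y -> lower s <= y.
Proof. exact: (ge_inf (lower_set_lb s)). Qed.

Let lower_ge s c : c <= s ->
  (forall r k, 0 <= r -> s <= b r k -> c <= (2 ^+ k)^-1 * a2 r) -> c <= lower s.
Proof.
move=> cs H; apply: lb_le_inf; first by exists s; left.
by move=> _ [->|[r [k [r0 sb ->]]]] //; apply: H.
Qed.

Let lower_mono s t : 0 <= s -> s <= t -> lower s <= lower t.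
Proof.
move=> s0 st; apply: lower_ge; first by apply: le_trans st; apply: lower_le; left.
move=> r k r0 tb; apply: lower_le; right; exists r, k; split => //.
exact: le_trans tb.
Qed.

Let lower_ge0 s : 0 <= s -> 0 <= lower s.
Proof.
by move=> s0; apply: lower_ge => // r k r0 _; rewrite mulr_ge0 ?a2_ge0 // invr_ge0 exprn_ge0.
Qed.

Let decay_lb s r k : 0 < s -> 0 <= r -> s <= b r k ->
  r / budget s^-1 <= (2 ^+ k)^-1 * a2 r.
Proof.
move=> s0 r0 sb; have Gs : 1 <= budget s^-1 by rewrite budget_ge1 // invr_ge0 ltW.
have Gr := budget_ge1 r0; have hb := budget_bound s0 r0 sb; have ha := a2_ge r0.
rewrite ler_pdivlMl ?exprn_gt0 // mulrA ler_pdivrMr; last by apply: lt_le_trans Gs.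
have h1 : 2 ^+ k * r <= (budget r + budget s^-1) * r by rewrite ler_wpM2r.
have h2 : r * budget r <= r * budget r * budget s^-1.
  by rewrite ler_peMr // mulr_ge0 // (le_trans ler01).
have h3 : r * (1 + budget r) * budget s^-1 <= a2 r * budget s^-1.
  by rewrite ler_wpM2r // (le_trans ler01).
nra.
Qed.

Let lower_gt0 s : 0 < s -> 0 < lower s.
Proof.
move=> s0; have [b0_cont b00 _] := b_classK 0.
have [d d0 Hd] := b0_cont 0 (lexx _) s s0; rewrite b00 in Hd.
have Gs : 0 < budget s^-1 by rewrite (lt_le_trans ltr01) ?budget_ge1 // invr_ge0 ltW.
apply: lt_le_trans (_ : 0 < Num.min s (d / budget s^-1)) _; first by rewrite lt_min s0 divr_gt0.
apply: lower_ge; first by rewrite ge_min lexx.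
move=> r k r0 sb; apply: le_trans (decay_lb s0 r0 sb); rewrite ge_min ler_pM2r ?invr_gt0 //.
apply/orP; right; rewrite leNgt; apply/negP => rd.
have := Hd r r0; rewrite subr0 ger0_norm // => /(_ rd); rewrite subr0 ger0_norm ?b_ge0 //.
by move=> /(le_lt_trans (le_trans sb (b_le_b0 k r0))); rewrite ltxx.
Qed.

Let lower_unbounded : unbounded_above lower.
Proof.
move=> M; have G1 := budget_ge1 ler01.
set m := Num.max M 0 * budget 1.
have M0 : 0 <= Num.max M 0 by rewrite le_max lexx orbT.
have Mm : M <= m by rewrite (@le_trans _ _ (Num.max M 0)) ?le_max ?lexx // ler_peMr.
set s := Num.max 1 (Num.max m (b m 0 + 1)).
have s1 : 1 <= s by rewrite le_max lexx.
have sm : m <= s by rewrite !le_max lexx orbT.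
have sb : b m 0 + 1 <= s by rewrite !le_max lexx !orbT.
have s0 : 0 < s by apply: lt_le_trans s1.
exists s; split; first exact: ltW.
apply: lower_ge => [|r k r0 sbr]; first exact: le_trans sm.
have rm : m < r.
  rewrite ltNge; apply/negP => rm.
  have := le_trans (b_le_b0 k r0) (b_mono 0 r0 rm); lra.
have s'0 : 0 <= s^-1 by rewrite invr_ge0 ltW.
have Gs := budget_ge1 s'0.
apply: le_trans (decay_lb s0 r0 sbr); rewrite ler_pdivlMr; last exact: lt_le_trans Gs.
apply: le_trans (ltW rm); apply: (@le_trans _ _ (Num.max M 0 * budget s^-1)).
  by rewrite ler_wpM2r ?le_max ?lexx // (le_trans ler01).
by rewrite ler_wpM2l // budget_mono // invf_le1.
Qed.

Lemma classKL_decay : exists a1 a2, [/\ classKinf a1, classKinf a2 &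
  forall r k, 0 <= r -> a1 (b r k) <= (2 ^+ k)^-1 * a2 r].
Proof.
have [a1 [a1K a1_le]] := classKinf_minorant lower_mono lower_ge0 lower_gt0 lower_unbounded.
exists a1, a2; split => // r k r0; apply: le_trans (a1_le _ (b_ge0 k r0)) _.
by apply: lower_le; right; exists r, k.
Qed.

End KLDecay.

Lemma PoszS (k : nat) : (Posz k + 1)%R = Posz k.+1.
Proof. by rewrite -addn1 PoszD. Qed.

Lemma NegzS (m : nat) : (Negz m + 1)%R = if m is m'.+1 then Negz m' else Posz 0.
Proof. case: m => [|m] /=; rewrite !NegzE; lia. Qed.

Lemma Phi_cons (X Sig : Type) (ft : X -> Sig -> X) (k : nat) x (z z' : int -> Sig) :
  (forall m : nat, z' (Posz m) = z (Posz m.+1)) ->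
  Phi ft k.+1 x z = Phi ft k (ft x (z 0)) z'.
Proof. by move=> zz'; elim: k => [|k IH] //=; rewrite -/(Phi ft k.+1 x z) IH zz'. Qed.

Section Walks.
Variables (Sig : Type) (S : finType) (E : S -> S -> Sig -> Prop).
Hypothesis HE : standing E.

Lemma ZGs_nonempty (j : S) : exists z, ZGs E j z.
Proof.
have out_ex s : exists p : S * Sig, E s p.1 p.2.
  by have [_ [s' [i e]]] := HE s; exists (s', i).
have inc_ex s : exists p : S * Sig, E p.1 s p.2.
  by have [[s' [i e]] _] := HE s; exists (s', i).
have [out outP] := choice out_ex; have [inc incP] := choice inc_ex.
pose fw m := iter m (fun s => (out s).1) j.
pose bw m := iter m (fun s => (inc s).1) j.
exists (fun k => match k with Posz m => (out (fw m)).2 | Negz m => (inc (bw m)).2 end).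
exists (fun k => match k with Posz m => fw m | Negz m => bw m.+1 end).
split => // -[m|m]; first by rewrite PoszS; exact: outP.
by rewrite NegzS; case: m => [|m]; exact: incP.
Qed.

Lemma ZGs_cons (j l : S) (i : Sig) (z' : int -> Sig) : E j l i -> ZGs E l z' ->
  exists z, [/\ ZGs E j z, z 0 = i & forall m : nat, z' (Posz m) = z (Posz m.+1)].
Proof.
move=> ejl [w' [Hw' w'0]]; have [z0 [w0 [Hw0 w00]]] := ZGs_nonempty j.
exists (fun k => match k with Posz 0 => i | Posz m.+1 => z' (Posz m) | Negz _ => z0 k end).
split => //.
exists (fun k => match k with Posz 0 => j | Posz m.+1 => w' (Posz m) | Negz _ => w0 k end).
split => // -[[|m]|m].
- by rewrite /= -w'0 in ejl.
- by rewrite PoszS /=; have := Hw' (Posz m); rewrite PoszS.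
- by have := Hw0 (Negz m); rewrite NegzS; case: m => [|m] //=; rewrite w00.
Qed.

End Walks.

Lemma vnorm_ge0 (R : realType) n (x : 'rV[R]_n) : 0 <= vnorm x.
Proof. exact: sqrtr_ge0. Qed.

Lemma classKL_geometric (R : realType) (a a' : R -> R) (gamma : R) :
  classK a -> classK a' -> 0 < gamma < 1 -> classKL (fun r k => a (gamma ^+ k * a' r)).
Proof.
move=> /classKP[ac a0 a_incr] /classKP[a'c a'0 a'_incr] /andP[g0 g1].
have a'_ge0 r : 0 <= r -> 0 <= a' r by exact: nonneg_incr_ge0.
have arg_ge0 k r : 0 <= r -> 0 <= gamma ^+ k * a' r.
  by move=> r0; rewrite mulr_ge0 ?a'_ge0 // exprn_ge0 // ltW.
split=> [k|r r0].
  apply/classKP; split; last 2 first.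
  - by rewrite a'0 mulr0.
  - move=> x y x0 xy; apply: a_incr; first exact: arg_ge0.
    by rewrite ltr_pM2l ?exprn_gt0 // a'_incr.
  apply: nonneg_continuous_comp ac _ (fun r r0 => arg_ge0 k r r0).
  by apply: nonneg_continuousZ => //; rewrite exprn_ge0 // ltW.
split=> [k|].
  apply: (nonneg_incr_le a_incr); first exact: arg_ge0.
  by rewrite exprS -mulrA ler_piMl ?arg_ge0 // ltW.
apply/cvgrPdist_lt => e e0; have [d d0 Hd] := ac 0 (lexx _) e e0.
have dd : 0 < d / (a' r + 1) by rewrite divr_gt0 // ltr_pwDr // ?a'_ge0.
have := @cvg_expr _ gamma; rewrite gtr0_norm // => /(_ g1)/cvgrPdist_lt/(_ _ dd).
apply: filterS => k; rewrite sub0r normrN ger0_norm ?exprn_ge0 ?ltW //.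
rewrite ltr_pdivlMr ?ltr_pwDr ?a'_ge0 // => hk.
have := Hd _ (arg_ge0 k r r0); rewrite a0 !subr0 ger0_norm ?arg_ge0 // sub0r normrN.
by apply; have := a'_ge0 r r0; have := exprn_gt0 k g0; nra.
Qed.

Lemma Lyapunov_walk_decay (X Sig : Type) (S : finType) (E : S -> S -> Sig -> Prop)
    (ft : X -> Sig -> X) (R : realType) (W : X -> S -> R) (gamma : R) z w x0 :
  0 <= gamma -> (forall x j l i, E j l i -> W (ft x i) l <= gamma * W x j) ->
  is_walk E z w -> forall k : nat, W (Phi ft k x0 z) (w k) <= gamma ^+ k * W x0 (w 0).
Proof.
move=> g0 Wdecr zw; elim=> [|k IH]; first by rewrite expr0 mul1r.
have := Wdecr (Phi ft k x0 z) _ _ _ (zw k); rewrite PoszS /= => /le_trans; apply.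
by rewrite exprS -mulrA ler_wpM2l.
Qed.

Section SwitchedSystem.
Variables (R : realType) (n : nat) (Sig : Type) (S : finType).
Variables (E : S -> S -> Sig -> Prop) (ft : 'rV[R]_n -> Sig -> 'rV[R]_n).

(* The contraction factor is raised to at least 1/2 so that the comparison
   function stays strictly increasing when gamma = 0. *)
Lemma GLyapunov_GUAS W : GLyapunov ft E W -> GUAS ft (ZG E).
Proof.
move=> [a1 [a2 [gamma [a1K [a2K [g0 [g1 [W_bounds W_decr]]]]]]]].
set gm := Num.max gamma 2^-1.
have gm0 : 0 < gm by rewrite lt_max invr_gt0 ltr0n orbT.
have gm1 : gm < 1 by rewrite gt_max g1 invf_lt1 ?ltr0n // ltr1n.
have [ai [aiK _ aiL]] := classKinf_inverse a1K.
have W_ge0 x j : 0 <= W x j.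
  have /classKinfP[_ a10 a1_incr _] := a1K.
  exact: le_trans (nonneg_incr_ge0 a1_incr a10 (vnorm_ge0 x)) (W_bounds x j).1.
have W_decr' x j l i : E j l i -> W (ft x i) l <= gm * W x j.
  by move=> ejl; apply: le_trans (W_decr x _ _ _ ejl) _; rewrite ler_wpM2r ?W_ge0 // le_max lexx.
exists (fun r k => ai (gm ^+ k * a2 r)); split.
  by apply: classKL_geometric; [case: aiK|case: a2K|rewrite gm0].
move=> k x0 z [w zw]; have /classKinfP[_ _ ai_incr _] := aiK.
rewrite -(aiL _ (vnorm_ge0 (Phi ft k x0 z))); apply: (nonneg_incr_le ai_incr).
  by have /classKinfP[_ a10 a1_incr _] := a1K; exact: (nonneg_incr_ge0 a1_incr a10 (vnorm_ge0 _)).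
apply: le_trans (W_bounds _ (w k)).1 _.
apply: le_trans (Lyapunov_walk_decay x0 (ltW gm0) W_decr' zw k) _.
by apply: ler_wpM2l; [rewrite exprn_ge0 // ltW|exact: (W_bounds x0 (w 0)).2].
Qed.

Hypothesis HE : standing E.

Lemma GUAS_GLyapunov : GUAS ft (ZG E) -> exists W, GLyapunov ft E W.
Proof.
move=> [b [bKL b_bound]].
have [a1 [a2 [a1K a2K a1b]]] := classKL_decay bKL.
have /classKinfP[_ a10 a1_incr _] := a1K.
pose Wset x j := [set 2 ^+ k * a1 (vnorm (Phi ft k x z)) | k in setT & z in ZGs E j].
pose W x j := sup (Wset x j).
have Wset_ub x j y : Wset x j y -> y <= a2 (vnorm x).
  move=> [k _ [z [w [zw _]] <-]]; rewrite -ler_pdivlMl ?exprn_gt0 //.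
  apply: le_trans (a1b _ k (vnorm_ge0 x)); apply: (nonneg_incr_le a1_incr) (vnorm_ge0 _) _.
  by apply: b_bound; exists w.
have Wset_Phi0 x j : Wset x j (a1 (vnorm x)).
  by have [z zj] := ZGs_nonempty HE j; exists 0%N => //; exists z => //; rewrite mul1r.
have Wset_has_ub x j : has_ubound (Wset x j) by exists (a2 (vnorm x)) => y /Wset_ub.
exists W, a1, a2, 2^-1; split=> //; split=> //.
split; first by rewrite invr_ge0 ler0n.
split; first by rewrite invf_lt1 ?ltr0n // ltr1n.
split=> [x j|x j l i ejl].
  split; first exact: ub_le_sup (Wset_has_ub x j) _ (Wset_Phi0 x j).
  by apply: ge_sup; [exists (a1 (vnorm x))|move=> y /Wset_ub].
apply: ge_sup; first by exists (a1 (vnorm (ft x i))).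
move=> _ [k _ [z' z'l <-]]; have [z [zj z0 zS]] := ZGs_cons HE ejl z'l.
rewrite -ler_pdivrMl ?invr_gt0 ?ltr0n // invrK mulrA -exprS -z0 -(Phi_cons ft k x zS).
by apply: ub_le_sup (Wset_has_ub x j) _ _; exists k.+1 => //; exists z.
Qed.

End SwitchedSystem.

Theorem mainTheorem6 (R : realType) (n : nat) (Sig : countType) (i0 : Sig)
  (S : finType) (E : S -> S -> Sig -> Prop) (HE : standing E)
  (ft : 'rV[R]_n -> Sig -> 'rV[R]_n) :
  GUAS ft (ZG E) <-> exists W : 'rV[R]_n -> S -> R, GLyapunov ft E W.
Proof.
split; first exact: GUAS_GLyapunov.
by move=> [W]; exact: GLyapunov_GUAS.
Qed.
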